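(* For any graph function $\alpha$ on a strongly connected digraph $G$, $\max_v y_v=0$.
   Context: $G$ is a strongly connected directed graph (self-loops allowed); a graph function assigns a real weight $\alpha_{uv}$ to each edge. $\alpha_v^{\text{in}}=\max_{u:(u,v)\in G}\alpha_{uv}$, $\alpha_v^{\text{out}}=\max_{w:(v,w)\in G}\alpha_{vw}$, $\rho^R_v=\max\{0,\alpha_v^{\text{out}}-\alpha_v^{\text{in}}\}$. A raising operation at $v$: if $\rho^R_v>0$ add $\rho^R_v/2$ to each incoming edge weight $\alpha_{uv}$ ($u\ne v$) and subtract it from each outgoing $\alpha_{vw}$ ($w\neq v$); otherwise do nothing. Starting from $\alpha$, for any infinite sequence of raising operations in which every vertex occurs infinitely often, the cumulative amount $r_v(t)$ by which each vertex has been raised converges to a limit vector $r^*$ independent of the sequence. The heights are $y_v=-r^*_v$. *)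

From HB Require Import structures.
From mathcomp Require Import all_boot all_order all_algebra.
From mathcomp Require Import all_classical all_reals all_analysis.
Set Implicit Arguments. Unset Strict Implicit. Unset Printing Implicit Defensive.
Import Order.TTheory GRing.Theory Num.Theory.
Local Open Scope ring_scope.

Section Raising.
Variables (R : realType) (V : finType) (E : rel V).

(* Strong connectivity: for all u v there is a directed path of length >= 1
   from u to v (so every vertex has in- and out-edges; self-loops allowed). *)
Definition strongly_connected : Prop :=
  forall u v : V, exists w : V, E u w && connect E w v.

(* maximum of a finite list, with junk value 0 on the empty list *)
Definition seqmax (s : seq R) : R := \big[Num.max/head 0 s]_(x <- s) x.

Definition alpha_in (a : V -> V -> R) (v : V) : R :=
  seqmax [seq a u v | u <- enum V & E u v].
Definition alpha_out (a : V -> V -> R) (v : V) : R :=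
  seqmax [seq a v w | w <- enum V & E v w].

Definition rhoR (a : V -> V -> R) (v : V) : R :=
  Num.max 0 (alpha_out a v - alpha_in a v).

(* the raising operation at v (weights are only meaningful on edges) *)
Definition raise (a : V -> V -> R) (v : V) : V -> V -> R :=
  fun x y =>
    a x y + (if (y == v) && (x != v) then rhoR a v / 2 else 0)
          - (if (x == v) && (y != v) then rhoR a v / 2 else 0).

Fixpoint weights_after (a : V -> V -> R) (s : nat -> V) (t : nat) : V -> V -> R :=
  match t with
  | 0 => a
  | t'.+1 => raise (weights_after a s t') (s t')
  end.

Definition raised (a : V -> V -> R) (s : nat -> V) (t : nat) (v : V) : R :=
  \sum_(i < t | s i == v) rhoR (weights_after a s i) v / 2.

Definition fair (s : nat -> V) : Prop :=
  forall (v : V) (N : nat), exists t, (N <= t)%N /\ s t = v.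

End Raising.

From HB Require Import structures.
From mathcomp Require Import all_boot all_order all_algebra.
From mathcomp Require Import all_classical all_reals all_analysis.
From mathcomp Require Import lra.
Set Implicit Arguments. Unset Strict Implicit. Unset Printing Implicit Defensive.
Import Order.TTheory GRing.Theory Num.Theory.
Import numFieldNormedType.Exports.
Local Open Scope classical_set_scope.
Local Open Scope ring_scope.

(** The weights after any number of raising operations are the initial ones
    reweighted by the potential [r(t)], and the excess [rhoR] of a reweighting
    is monotone in the potential up to twice the change at the vertex. If [h >= 0] is a potential for which the reweighted
    graph is balanced (no vertex has positive excess), the cumulative raisings
    never exceed [h]: raising [v] stops once [r_v] reaches [h v]. And a limit
    [r*] of the raisings along a fair sequence is such a potential, since
    every visit of [v] raises it by half its excess, which must vanish in the
    limit. Balance is invariant under adding a constant, so [r* - min r*] is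
    again admissible; hence [r*] is bounded by [r* - min r*], forcing
    [min r* <= 0], while [r* >= 0] trivially. Strong connectivity is only
    needed for the existence of the limit, which is assumed here. *)

Lemma seqmax_map_le (R : realType) (T : eqType) (l : seq T) (f g : T -> R) c :
  0 <= c -> (forall u, f u <= g u + c) ->
  seqmax [seq f u | u <- l] <= seqmax [seq g u | u <- l] + c.
Proof.
case: l => [|u0 l] c_ge0 fg; first by rewrite /seqmax !big_nil add0r.
rewrite /seqmax /= -!map_cons !big_map [X in X <= _]big_seq.
apply: bigmax_le => [|u ul].
  by rewrite (le_trans (fg u0)) // lerD2r le_bigmax_seq ?mem_head.
by rewrite (le_trans (fg u)) // lerD2r le_bigmax_seq.
Qed.

Section Reweighting.
Variables (R : realType) (V : finType) (E : rel V).
Implicit Types (a : V -> V -> R) (h : V -> R).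

Definition reweight a h : V -> V -> R := fun x y => a x y + h y - h x.

Definition balanced a : Prop := forall v, rhoR E a v = 0.

Lemma rhoR_ge0 a v : 0 <= rhoR E a v.
Proof. by rewrite /rhoR le_max lexx. Qed.

Lemma reweight_addC a h c : reweight a (fun x => h x + c) = reweight a h.
Proof. by apply/funext => x; apply/funext => y; rewrite /reweight; lra. Qed.

Lemma rhoR_reweight_le a h h' v : (forall x, h x <= h' x) ->
  rhoR E (reweight a h) v <= rhoR E (reweight a h') v + 2 * (h' v - h v).
Proof.
move=> hh'; have d_ge0 : 0 <= h' v - h v by rewrite subr_ge0.
have out_le : alpha_out E (reweight a h) v
              <= alpha_out E (reweight a h') v + (h' v - h v).
  by apply: seqmax_map_le => // w; have := hh' w; rewrite /reweight; lra.
have in_le : alpha_in E (reweight a h') v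
             <= alpha_in E (reweight a h) v + (h' v - h v).
  by apply: seqmax_map_le => // u; have := hh' u; rewrite /reweight; lra.
have := rhoR_ge0 (reweight a h') v; rewrite /rhoR ge_max => ge0.
apply/andP; split; first lra.
have : alpha_out E (reweight a h') v - alpha_in E (reweight a h') v
       <= Num.max 0 (alpha_out E (reweight a h') v - alpha_in E (reweight a h') v).
  by rewrite le_max lexx orbT.
lra.
Qed.

Variables (a : V -> V -> R) (s : nat -> V).

Lemma raised0 v : raised E a s 0 v = 0.
Proof. by rewrite /raised big_ord0. Qed.

Lemma raisedS t v : raised E a s t.+1 v = raised E a s t v +
  (if s t == v then rhoR E (weights_after E a s t) v / 2 else 0).
Proof. by rewrite /raised big_mkcond big_ord_recr /= -big_mkcond. Qed.

Lemma raised_ge0 t v : 0 <= raised E a s t v.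
Proof. by apply: sumr_ge0 => i _; rewrite divr_ge0 ?rhoR_ge0. Qed.

Lemma weights_afterE t : weights_after E a s t = reweight a (raised E a s t).
Proof.
apply/funext => x; apply/funext => y; rewrite /reweight.
elim: t x y => [|t IH] x y /=; first by rewrite !raised0; lra.
rewrite /raise IH !raisedS.
case: (eqVneq x (s t)) => [->|hx]; case: (eqVneq y (s t)) => [->|hy] /=;
  rewrite ?eqxx ?(negbTE hx) ?(negbTE hy) ?(eq_sym (s t)) ?(negbTE hx) ?(negbTE hy) /=;
  lra.
Qed.

Lemma raised_le_balanced h : (forall x, 0 <= h x) -> balanced (reweight a h) ->
  forall t x, raised E a s t x <= h x.
Proof.
move=> h_ge0 bal; elim=> [|t IH] x; first by rewrite raised0.
rewrite raisedS; case: eqP => [<-|_]; last by rewrite addr0.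
have := rhoR_reweight_le a (s t) IH.
by rewrite -weights_afterE bal; lra.
Qed.

Lemma limit_balanced (rstar : V -> R) : fair s ->
  (forall v, (fun t => raised E a s t v) @ \oo --> rstar v) ->
  balanced (reweight a rstar).
Proof.
move=> fair_s cvg_r v; apply/eqP; rewrite eq_le rhoR_ge0 andbT.
apply/ler_addgt0Pr => e e_gt0; rewrite add0r.
have e8_gt0 : 0 < e / 8 by rewrite divr_gt0.
have : \forall t \near \oo, forall x, `|rstar x - raised E a s t x| < e / 8.
  by apply: filter_forall => x; move/cvgrPdist_lt: (cvg_r x) => /(_ _ e8_gt0).
case=> N _ close; have [t [Nt stv]] := fair_s v N.
have near_t x : - (e / 8) < rstar x - raised E a s t x < e / 8.
  by rewrite -ltr_norml; apply: close.
have near_t1 : - (e / 8) < rstar v - raised E a s t.+1 v < e / 8.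
  by rewrite -ltr_norml; apply: close; exact: leqW.
have below x : rstar x - e / 8 <= raised E a s t x.
  by have /andP[_ ?] := near_t x; lra.
have := rhoR_reweight_le a v below; rewrite reweight_addC -weights_afterE.
have := raisedS t v; rewrite stv eqxx.
by have /andP[? ?] := near_t v; move: near_t1 => /andP[? ?]; lra.
Qed.

End Reweighting.

Theorem corollary1 (R : realType) (V : finType) (E : rel V) (v0 : V)
    (alpha : V -> V -> R) (s : nat -> V) (rstar : V -> R) :
  strongly_connected E ->
  fair s ->
  (forall v : V, (fun t => raised E alpha s t v) @ \oo --> rstar v) ->
  (exists v : V, - rstar v = 0) /\ (forall v : V, - rstar v <= 0).
Proof.
move=> _ fair_s cvg_r.
have rstar_ge0 v : 0 <= rstar v.
  by apply: (cvgr_to_ge (cvg_r v)); apply: nearW => t; apply: raised_ge0.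
split; last by move=> v; rewrite oppr_le0.
have [vm _ vm_min] := @arg_minP _ R V v0 xpredT rstar erefl.
exists vm; apply/eqP; rewrite oppr_eq0 eq_le rstar_ge0 andbT.
pose h x := rstar x - rstar vm.
have bal : balanced E (reweight alpha h) by rewrite reweight_addC; exact: limit_balanced.
have bound t : raised E alpha s t vm <= h vm.
  by apply: raised_le_balanced => // x; rewrite subr_ge0 vm_min.
have : rstar vm <= h vm by apply: (cvgr_to_le (cvg_r vm)); apply: nearW.
by rewrite /h subrr.
Qed.
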